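(* Assume $B_{r,s}(\delta)$ is semisimple. If $\lambda,\mu\in\Lambda_{r,s}$ with $\lambda\ne\mu$, then there is a supersymmetric polynomial $p\in S_{r,s}[x;y]$ with $p\big(c(\lambda,1),\dots,c(\lambda,r+s)\big)\ne p\big(c(\mu,1),\dots,c(\mu,r+s)\big)$.
   Context: $B_{r,s}(\delta)$ is the walled Brauer algebra ($r,s\ge0$, $\delta\in\mathbb C$). It is known to be semisimple iff one of: $r=0$ or $s=0$; $\delta\notin\mathbb Z$; $|\delta|>r+s-2$; $\delta=0$ and $(r,s)\in\{(1,2),(1,3),(2,1),(3,1)\}$. A supersymmetric polynomial $p\in\mathbb C[x_1,\dots,x_r,y_1,\dots,y_s]$ is one symmetric in the $x$'s and separately in the $y$'s such that setting $x_r=-y_1=t$ yields a polynomial independent of $t$; $S_{r,s}[x;y]$ is the algebra of these; evaluation at $(a_1,\dots,a_{r+s})$ means $x_i=a_i$, $y_j=a_{r+j}$. $\Lambda^t_{r,s}$ is the set of pairs of partitions $(\lambda^L,\lambda^R)$ with $|\lambda^L|=r-t$, $|\lambda^R|=s-t$, and $\Lambda_{r,s}=\bigsqcup_{t=0}^{\min(r,s)}\Lambda^t_{r,s}$. For a partition $\nu$ and $1\le i\le|\nu|$, $\mathrm{cont}(\nu,i)$ is $b-a$ where $(a,b)$ (row, column) is the position of the box containing $i$ in the tableau filling the Young diagram of $\nu$ with $1,\dots,|\nu|$ in order left to right along successive rows. For $\lambda\in\Lambda^t_{r,s}$: $c(\lambda,i)=\mathrm{cont}(\lambda^L,i)$ for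 $1\le i\le r-t$; $c(\lambda,i)=0$ for $r-t<i\le r+t$; $c(\lambda,i)=\mathrm{cont}(\lambda^R,i-r-t)+\delta$ for $r+t<i\le r+s$. *)

From HB Require Import structures.
From mathcomp Require Import all_boot all_order all_fingroup all_algebra.
Set Implicit Arguments. Unset Strict Implicit. Unset Printing Implicit Defensive.
Import Order.TTheory GRing.Theory Num.Theory.
Local Open Scope ring_scope.

Definition monom (n : nat) := {ffun 'I_n -> nat}.
(* A polynomial is a finite formal sum of terms (exponent vector, coefficient);
   it is identified with its coefficient function [mcoef]. *)
Definition mpoly (R : Type) (n : nat) := seq (monom n * R).

Definition mcoef (R : nmodType) (n : nat) (p : mpoly R n) (m : monom n) : R :=
  \sum_(t <- p | t.1 == m) t.2.

Definition meval (R : comNzRingType) (n : nat) (p : mpoly R n) (a : 'I_n -> R) : R :=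
  \sum_(t <- p) t.2 * \prod_(i < n) a i ^+ t.1 i.

(* exponent of variable number j (0-based) in m, 0 if j >= n *)
Definition mexp (n : nat) (m : monom n) (j : nat) : nat :=
  odflt 0%N (omap m (insub j)).

(* Variables: x_1..x_r are indices 0..r-1, y_1..y_s are indices r..r+s-1. *)
Definition xy_symmetric (R : nmodType) (r s : nat) (p : mpoly R (r + s)) : Prop :=
  forall sigma : {perm 'I_(r + s)}, (forall i : 'I_(r + s), (sigma i < r)%N = (i < r)%N) ->
  forall m : monom (r + s), mcoef p [ffun i => m (sigma i)] = mcoef p m.

(* Substituting x_r = t, y_1 = -t (indices r-1 and r) gives a polynomial in t and the
   remaining variables; it is independent of t iff all its coefficients of
   monomials with positive t-degree vanish. The coefficient of
   (remaining monomial m) * t^k is the sum below. *)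
Definition drop_xr_y1 (r s : nat) (m : monom (r + s)) : monom (r + s) :=
  [ffun i : 'I_(r + s) => if ((i : nat) == r.-1) || ((i : nat) == r) then 0%N else m i].

Definition cancellation_property (R : nzRingType) (r s : nat) (p : mpoly R (r + s)) : Prop :=
  (0 < r)%N -> (0 < s)%N ->
  forall (m : monom (r + s)) (k : nat), (0 < k)%N ->
  \sum_(t <- p | (drop_xr_y1 t.1 == m) && (mexp t.1 r.-1 + mexp t.1 r == k)%N)
     t.2 * (-1) ^+ (mexp t.1 r) = 0.

Definition supersymmetric (R : nzRingType) (r s : nat) (p : mpoly R (r + s)) : Prop :=
  xy_symmetric p /\ cancellation_property p.

Definition is_partition (nu : seq nat) : bool :=
  sorted geq nu && all (fun x => 0 < x)%N nu.

(* content of the box containing i (1-based) when the diagram of nu is filled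
   row by row; rows counted from [row] *)
Fixpoint cont_aux (nu : seq nat) (i row : nat) : int :=
  match nu with
  | [::] => 0
  | x :: nu' => if (i <= x)%N then (i%:Z - row%:Z)%R else cont_aux nu' (i - x) row.+1
  end.
Definition cont (nu : seq nat) (i : nat) : int := cont_aux nu i 1.

(* bipartitions: lambda = (lambda^L, lambda^R) *)
Definition in_Lambda_t (r s t : nat) (lam : seq nat * seq nat) : bool :=
  [&& (t <= minn r s)%N, is_partition lam.1, is_partition lam.2,
      sumn lam.1 == r - t & sumn lam.2 == s - t]%N.
Definition in_Lambda (r s : nat) (lam : seq nat * seq nat) : Prop :=
  exists t, in_Lambda_t r s t lam.

(* c(lambda, i) for 1 <= i <= r+s, where t = r - |lambda^L| *)
Definition cval (C : nzRingType) (r s : nat) (delta : C) (lam : seq nat * seq nat) (i : nat) : C :=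
  let t := (r - sumn lam.1)%N in
  if (i <= r - t)%N then (cont lam.1 i)%:~R
  else if (i <= r + t)%N then 0
  else (cont lam.2 (i - r - t))%:~R + delta.

Definition cpoint (C : nzRingType) (r s : nat) (delta : C) (lam : seq nat * seq nat)
  : 'I_(r + s) -> C := fun j => cval r s delta lam (j.+1).

Definition walled_brauer_semisimple (C : numClosedFieldType) (r s : nat) (delta : C) : Prop :=
  [\/ r = 0%N \/ s = 0%N,
      ~ (exists z : int, delta = z%:~R),
      (r + s)%:R - 2 < `|delta|
    | delta = 0 /\ (r, s) \in [:: (1, 2); (1, 3); (2, 1); (3, 1)]%N].
Arguments cpoint {C} r s delta lam _.
Arguments walled_brauer_semisimple {C} r s delta.

From HB Require Import structures.
From mathcomp Require Import all_boot all_order all_fingroup all_algebra.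
From mathcomp Require Import zify ring.
Set Implicit Arguments. Unset Strict Implicit. Unset Printing Implicit Defensive.
Import Order.TTheory GRing.Theory Num.Theory.
Local Open Scope ring_scope.

(* For a univariate polynomial q, the polynomial sum_i q(x_i) - sum_j q(-y_j) is
   supersymmetric: after x_r = -y_1 = t its two terms in t cancel.  At the point
   c(lam) the t zero coordinates cancel as well, leaving the sum of q over the
   contents of lam^L minus the sum of q over the values -(c + delta), c a content
   of lam^R.  Such sums separate finite multisets, so it suffices that this formal
   difference of multisets determines lam.  Contents of lam^L lie in (-r, r) and
   those of lam^R in (-s, s), so a coincidence c1 = -(c2 + delta) would make delta
   an integer with |delta| <= r + s - 2.  Semisimplicity rules this out except on
   four small walls with delta = 0, which are checked by enumeration.  Otherwise
   the two parts never interact and each partition is recovered from its multiset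
   of contents, the largest content giving the length of the first row. *)

Fixpoint contents_aux (nu : seq nat) (row : nat) : seq int :=
  if nu is x :: nu' then [seq j%:Z - row%:Z | j <- iota 1 x] ++ contents_aux nu' row.+1
  else [::].

Definition contents (nu : seq nat) : seq int := contents_aux nu 1.

Lemma map_cont_aux_iota nu row :
  [seq cont_aux nu i row | i <- iota 1 (sumn nu)] = contents_aux nu row.
Proof.
elim: nu row => [|x nu IH] row //=.
rewrite iotaD map_cat; congr (_ ++ _).
  by apply/eq_in_map => i; rewrite mem_iota => /andP[_ hi]; rewrite ifT //; lia.
rewrite -IH addnC iotaDl -map_comp; apply/eq_in_map => i.
rewrite mem_iota => /andP[hi _] /=.
by rewrite ifN ?addKn //; lia.
Qed.

Lemma map_cont_iota nu : [seq cont nu i | i <- iota 1 (sumn nu)] = contents nu.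
Proof. exact: map_cont_aux_iota. Qed.

Lemma is_partition_cons x nu :
  is_partition (x :: nu) -> [/\ (0 < x)%N, (head 0 nu <= x)%N & is_partition nu].
Proof.
rewrite /is_partition /= => /andP[nu_sorted /andP[x_gt0 nu_pos]]; split => //.
  by case: (nu) nu_sorted => //= y l /andP[].
by rewrite nu_pos (path_sorted nu_sorted).
Qed.

Lemma contents_aux_lb nu row c :
  c \in contents_aux nu row -> 1 - (row + size nu)%:Z < c.
Proof.
elim: nu row => [|x nu IH] row //=.
by rewrite mem_cat => /orP[/mapP[j]|/IH]; rewrite ?mem_iota; lia.
Qed.

Lemma contents_aux_ub nu row x : sorted geq nu -> (head 0 nu <= x)%N ->
  {in contents_aux nu row, forall c, c <= x%:Z - row%:Z}.
Proof.
elim: nu row x => [|y nu IH] row x //= y_nu_sorted y_le_x c.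
have nu_sorted := path_sorted y_nu_sorted.
have head_le_y : (head 0 nu <= y)%N by case: (nu) y_nu_sorted => //= z l /andP[].
rewrite mem_cat => /orP[/mapP[j]|/(IH _ _ nu_sorted head_le_y)]; rewrite ?mem_iota; lia.
Qed.

Lemma mem_contents_aux_head y nu row :
  (0 < y)%N -> y%:Z - row%:Z \in contents_aux (y :: nu) row.
Proof.
move=> y_gt0; rewrite mem_cat; apply/orP; left.
by apply/mapP; exists y; rewrite ?mem_iota //; lia.
Qed.

Lemma contents_bound nu c :
  is_partition nu -> c \in contents nu -> - (sumn nu)%:Z < c < (sumn nu)%:Z.
Proof.
case: nu => [|x nu] // /andP[xnu_sorted /andP[x_gt0 nu_pos]] c_in.
have size_le : (size nu <= sumn nu)%N.
  by elim: (nu) nu_pos => //= y l IH /andP[y_gt0 /IH]; lia.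
have := contents_aux_lb c_in; have := contents_aux_ub xnu_sorted (leqnn x) c_in.
rewrite /=; lia.
Qed.

Lemma contents_aux_inj nu mu row : is_partition nu -> is_partition mu ->
  perm_eq (contents_aux nu row) (contents_aux mu row) -> nu = mu.
Proof.
elim: nu mu row => [|x nu IH] [|y mu] row //.
- move=> _ /is_partition_cons[y_gt0 _ _] /perm_mem/(_ (y%:Z - row%:Z)).
  by rewrite mem_contents_aux_head.
- move=> /is_partition_cons[x_gt0 _ _] _ /perm_mem/(_ (x%:Z - row%:Z)).
  by rewrite mem_contents_aux_head.
move=> xnu_part ymu_part same_contents.
have /is_partition_cons[x_gt0 _ nu_part] := xnu_part.
have /is_partition_cons[y_gt0 _ mu_part] := ymu_part.
have ub x' nu' : is_partition (x' :: nu') ->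
    {in contents_aux (x' :: nu') row, forall c, c <= x'%:Z - row%:Z}.
  by case/andP => sorted_nu' _; apply: contents_aux_ub.
have x_eq_y : x = y.
  have x_in_mu := perm_mem same_contents (x%:Z - row%:Z).
  have y_in_nu := perm_mem same_contents (y%:Z - row%:Z).
  rewrite !mem_contents_aux_head // in x_in_mu y_in_nu.
  have := ub _ _ ymu_part _ (esym x_in_mu); have := ub _ _ xnu_part _ y_in_nu.
  lia.
subst y; move: same_contents; rewrite perm_cat2l => same_contents.
by rewrite (IH mu row.+1).
Qed.

Section PowerSumPolynomial.
Variables (R : nzRingType) (r s : nat).

Definition monoX (i : 'I_(r + s)) (k : nat) : monom (r + s) :=
  [ffun j => if j == i then k else 0%N].

Definition psum_coef (q : {poly R}) (i : 'I_(r + s)) (k : nat) : R :=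
  if (i < r)%N then q`_k else - ((-1) ^+ k * q`_k).

Definition psum_poly (q : {poly R}) : mpoly R (r + s) :=
  [seq (monoX i k, psum_coef q i k)
  | i : 'I_(r + s) <- enum 'I_(r + s), k : 'I_(size q) <- enum 'I_(size q)].

Lemma big_psum_poly (q : {poly R}) (F : monom (r + s) * R -> R) :
  \sum_(t <- psum_poly q) F t =
  \sum_(i < r + s) \sum_(k < size q) F (monoX i k, psum_coef q i k).
Proof.
rewrite big_allpairs_dep /= big_enum /=; apply: eq_bigr => i _.
by rewrite big_enum.
Qed.

Lemma mexp_monoX (i : 'I_(r + s)) k j :
  (j < r + s)%N -> mexp (monoX i k) j = if j == i then k else 0%N.
Proof. by move=> j_lt; rewrite /mexp (insubT (fun j => j < r + s)%N j_lt) /= ffunE. Qed.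

Lemma psum_poly_xy_symmetric q : xy_symmetric (psum_poly q).
Proof.
move=> sigma sigma_xy m.
rewrite /mcoef big_mkcond big_psum_poly [RHS]big_mkcond big_psum_poly.
rewrite [RHS](reindex_inj (@perm_inj _ sigma)); apply: eq_bigr => i _.
apply: eq_bigr => k _; rewrite /= /psum_coef sigma_xy.
congr (if _ then _ else _); apply/eqP/eqP => [m_sigma|<-]; apply/ffunP => j.
  have := congr1 (fun f : monom _ => f ((sigma^-1)%g j)) m_sigma.
  by rewrite !ffunE permKV (canF_eq (permKV sigma)) => <-.
by rewrite !ffunE (inj_eq (@perm_inj _ sigma)).
Qed.

Lemma psum_poly_cancellation q : cancellation_property (psum_poly q).
Proof.
move=> r_gt0 s_gt0 m k k_gt0; rewrite big_mkcond big_psum_poly /=.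
have xr_lt : (r.-1 < r + s)%N by lia.
have y1_lt : (r < r + s)%N by lia.
pose xr := Ordinal xr_lt; pose y1 := Ordinal y1_lt.
have y1_neq_xr : y1 != xr by apply/eqP => /(congr1 val) /=; lia.
rewrite (bigD1 xr) //= (bigD1 y1) //= addrA [X in _ + X]big1 ?addr0; last first.
  move=> i /andP[i_neq_xr i_neq_y1]; apply: big1 => j _; rewrite !mexp_monoX //.
  have -> : (r.-1 == i) = false.
    by apply: contraNF i_neq_xr => /eqP xr_eq; apply/eqP/val_inj.
  have -> : (r == i) = false.
    by apply: contraNF i_neq_y1 => /eqP y1_eq; apply/eqP/val_inj.
  by rewrite addn0 [0%N == k]eq_sym (gtn_eqF k_gt0) andbF.
rewrite -big_split /=; apply: big1 => j _.
have drop_monoX i : (i = xr \/ i = y1) -> drop_xr_y1 (monoX i j) = [ffun => 0%N].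
  move=> i_xr_y1; apply/ffunP => l; rewrite /drop_xr_y1 /monoX !ffunE.
  case: ifP => // l_neq; case: eqP => // l_eq_i.
  by move: l_neq; rewrite l_eq_i; case: i_xr_y1 => -> /=; rewrite eqxx ?orbT.
rewrite !drop_monoX ?(mexp_monoX _ _ xr_lt) ?(mexp_monoX _ _ y1_lt); [|by right|by left].
have xr_neq_y1 : (r.-1 == r) = false by apply/eqP; lia.
have xr_lt_r : (r.-1 < r)%N by lia.
rewrite /= !eqxx xr_neq_y1 [r == r.-1]eq_sym xr_neq_y1 addn0 add0n.
case: (_ && _); last by rewrite addr0.
rewrite /psum_coef /= xr_lt_r ltnn expr0 mulr1 mulNr -mulrA commr_sign mulrA.
by rewrite -expr2 -exprM mulnC exprM sqrrN !expr1n mul1r subrr.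
Qed.

Lemma psum_poly_supersymmetric q : supersymmetric (psum_poly q).
Proof. by split; [apply: psum_poly_xy_symmetric | apply: psum_poly_cancellation]. Qed.

End PowerSumPolynomial.

Lemma meval_psum_poly (C : comNzRingType) r s (q : {poly C}) (a : 'I_(r + s) -> C) :
  meval (psum_poly r s q) a =
  \sum_(i < r) q.[a (lshift s i)] - \sum_(j < s) q.[- a (rshift r j)].
Proof.
have monoX_prod k (j : 'I_(r + s)) : \prod_(l < r + s) a l ^+ monoX j k l = a j ^+ k.
  rewrite (bigD1 j) //= big1 ?mulr1 => [|l l_neq_j]; first by rewrite ffunE eqxx.
  by rewrite ffunE (negbTE l_neq_j) expr0.
rewrite /meval big_psum_poly big_split_ord -sumrN; congr (_ + _); apply: eq_bigr => i _;
  under eq_bigr => k _ do rewrite monoX_prod.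
  by rewrite /psum_coef /= ltn_ord horner_coef.
rewrite /psum_coef /= ltnNge leq_addr /= horner_coef -sumrN.
by apply: eq_bigr => k _; rewrite [in RHS]exprNn; ring.
Qed.

Lemma big_iota (R : nmodType) m n (F : nat -> R) :
  \sum_(i <- iota m n) F i = \sum_(i < n) F (m + i)%N.
Proof. by rewrite -[in LHS](addn0 m) iotaDl big_map -[n in iota 0 n]subn0 big_mkord. Qed.

Definition left_contents {C : nzRingType} (lam : seq nat * seq nat) : seq C :=
  [seq c%:~R | c <- contents lam.1].

Definition right_contents (C : nzRingType) (delta : C) (lam : seq nat * seq nat) : seq C :=
  [seq - (c%:~R + delta) | c <- contents lam.2].

Lemma map_constant_in (T U : eqType) (f : T -> U) (l : seq T) y :
  {in l, forall x, f x = y} -> map f l = nseq (size l) y.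
Proof.
move=> f_const; rewrite -(size_map f); apply/all_pred1P/allP => _ /mapP[x x_l ->].
by rewrite /= f_const.
Qed.

Section EvaluationPoint.
Variables (C : nzRingType) (r s t : nat) (delta : C) (lam : seq nat * seq nat).
Hypothesis lam_t : in_Lambda_t r s t lam.

Let t_le_r : (t <= r)%N. Proof. by case/and5P: lam_t; lia. Qed.
Let t_le_s : (t <= s)%N. Proof. by case/and5P: lam_t; lia. Qed.
Let size_left : sumn lam.1 = (r - t)%N. Proof. by case/and5P: lam_t => _ _ _ /eqP. Qed.
Let size_right : sumn lam.2 = (s - t)%N. Proof. by case/and5P: lam_t => _ _ _ _ /eqP. Qed.

Lemma map_cval_x :
  [seq cval r s delta lam i | i <- iota 1 r] = left_contents lam ++ nseq t 0.
Proof.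
rewrite -[r in iota 1 r](subnK t_le_r) iotaD map_cat; congr (_ ++ _).
  rewrite /left_contents -size_left -map_cont_iota -map_comp; apply/eq_in_map => i.
  by rewrite mem_iota /cval /= size_left => /andP[_ i_le]; rewrite ifT //; lia.
rewrite (@map_constant_in _ _ _ _ 0) ?size_iota // => i.
by rewrite mem_iota /cval size_left => /andP[lb ub]; rewrite ifF ?ifT //; lia.
Qed.

Lemma map_cval_y :
  [seq - cval r s delta lam i | i <- iota r.+1 s] = nseq t 0 ++ right_contents delta lam.
Proof.
rewrite -[s in iota _ s](subnKC t_le_s) iotaD map_cat; congr (_ ++ _).
  rewrite (@map_constant_in _ _ _ _ 0) ?size_iota // => i.
  by rewrite mem_iota /cval size_left => /andP[lb ub]; rewrite ifF ?ifT ?oppr0 //; lia.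
rewrite /right_contents -size_right -map_cont_iota -map_comp.
rewrite (_ : (r.+1 + t = r + t + 1)%N) ?iotaDl -?map_comp; last by lia.
apply/eq_in_map => i; rewrite mem_iota /cval size_left /= => /andP[lb ub].
have -> : (r + t + i - r - (r - (r - t)) = i)%N by lia.
by rewrite ifF ?ifF //; lia.
Qed.

End EvaluationPoint.

Lemma meval_psum_poly_cpoint (C : comNzRingType) r s (delta : C) lam (q : {poly C}) :
  in_Lambda r s lam ->
  meval (psum_poly r s q) (cpoint r s delta lam) =
  \sum_(x <- left_contents lam) q.[x] - \sum_(x <- right_contents delta lam) q.[x].
Proof.
case=> t lam_t; rewrite meval_psum_poly.
have -> : \sum_(i < r) q.[cpoint r s delta lam (lshift s i)] =
          \sum_(x <- left_contents lam ++ nseq t 0) q.[x].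
  by rewrite -(map_cval_x delta lam_t) big_map big_iota.
have -> : \sum_(j < s) q.[- cpoint r s delta lam (rshift r j)] =
          \sum_(x <- nseq t 0 ++ right_contents delta lam) q.[x].
  by rewrite -(map_cval_y delta lam_t) big_map big_iota.
by rewrite !big_cat opprD addrA addrK.
Qed.

(* A polynomial vanishing on [U ++ W] except at [a] counts the occurrences of [a]. *)
Lemma sum_horner_separates (C : numDomainType) (U W : seq C) :
  ~~ perm_eq U W -> exists q : {poly C}, \sum_(x <- U) q.[x] != \sum_(x <- W) q.[x].
Proof.
case/allPn => a _ /= count_neq.
pose q := \prod_(b <- U ++ W | b != a) ('X - b%:P).
have qa_neq0 : q.[a] != 0.
  rewrite horner_prod prodf_seq_neq0; apply/allP => b _; apply/implyP => b_neq_a.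
  by rewrite hornerXsubC subr_eq0 eq_sym.
have q_on x : x \in U ++ W -> q.[x] = if x == a then q.[a] else 0.
  move=> x_UW; case: eqP => [-> //|/eqP x_neq_a]; apply/eqP.
  rewrite horner_prod prodf_seq_eq0; apply/hasP; exists x => //.
  by rewrite x_neq_a hornerXsubC subrr eqxx.
have sum_q V : {subset V <= U ++ W} -> \sum_(x <- V) q.[x] = q.[a] *+ count_mem a V.
  move=> V_UW; rewrite (eq_big_seq (fun x => if x == a then q.[a] else 0)); last first.
    by move=> x /V_UW /q_on.
  by rewrite -big_mkcond big_const_seq iter_addr_0.
exists q; rewrite !sum_q ?(inj_eq (mulrIn qa_neq0)) //.
  exact/mem_subseq/suffix_subseq.
exact/mem_subseq/prefix_subseq.
Qed.

Lemma perm_cat_disjoint (T : eqType) (A1 A2 B1 B2 : seq T) :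
  perm_eq (A1 ++ B2) (A2 ++ B1) -> {in B1 ++ B2, forall x, x \notin A1 ++ A2} ->
  perm_eq A1 A2 /\ perm_eq B1 B2.
Proof.
move=> same disjoint.
pose inA := [pred x | x \in A1 ++ A2].
have count_in a l : {subset l <= A1 ++ A2} -> count (predI a inA) l = count a l.
  by move=> l_A; apply: eq_in_count => x /l_A /= ->; rewrite andbT.
have count_out a l : {subset l <= B1 ++ B2} -> count (predI a inA) l = 0%N.
  move=> l_B; rewrite -(count_pred0 l); apply: eq_in_count => x.
  by move=> /l_B /disjoint /negbTE /= ->; rewrite andbF.
have permA : perm_eq A1 A2.
  apply/seq.permP => a; move: (seq.permP same (predI a inA)); rewrite !count_cat.
  rewrite (count_in _ _ (mem_subseq (prefix_subseq _ _))).
  rewrite (count_in _ _ (mem_subseq (suffix_subseq _ _))).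
  rewrite (count_out _ _ (mem_subseq (prefix_subseq _ _))).
  by rewrite (count_out _ _ (mem_subseq (suffix_subseq _ _))) !addn0.
split => //; rewrite perm_sym -(perm_cat2l A1) (perm_trans same) //.
by rewrite perm_cat2r perm_sym.
Qed.

Lemma in_Lambda_contents_bound r s lam : in_Lambda r s lam ->
  {in contents lam.1, forall c, - (r%:Z) < c < r%:Z} /\
  {in contents lam.2, forall c, - (s%:Z) < c < s%:Z}.
Proof.
case=> t /and5P[_ left_part right_part /eqP size_left /eqP size_right].
split=> c; [move/(contents_bound left_part) | move/(contents_bound right_part)]; lia.
Qed.

Lemma bipartition_eq_of_perm_contents (C : numDomainType) (delta : C) lam mu :
  is_partition lam.1 -> is_partition lam.2 -> is_partition mu.1 -> is_partition mu.2 ->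
  {in contents lam.1 ++ contents mu.1 & contents lam.2 ++ contents mu.2,
    forall c1 c2, c1%:~R != - (c2%:~R + delta)} ->
  perm_eq (left_contents lam ++ right_contents delta mu)
          (left_contents mu ++ right_contents delta lam) ->
  lam = mu.
Proof.
move=> lam1_part lam2_part mu1_part mu2_part no_collision same_contents.
have [x|same_left same_right] := perm_cat_disjoint same_contents.
  rewrite -!map_cat => /mapP[c2 c2_in ->]; apply/mapP => -[c1 c1_in] /eqP.
  by rewrite eq_sym; apply/negP/no_collision.
apply: injective_projections; apply: (@contents_aux_inj _ _ 1) => //.
  by apply: perm_map_inj same_left; apply: intr_inj.
by apply: perm_map_inj same_right => c c' /oppr_inj /addIr /intr_inj.
Qed.

Lemma no_content_collision (C : numDomainType) r s (delta : C) (c1 c2 : int) :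
  [\/ r = 0%N \/ s = 0%N, ~ (exists z : int, delta = z%:~R) | (r + s)%:R - 2 < `|delta|] ->
  - (r%:Z) < c1 < r%:Z -> - (s%:Z) < c2 < s%:Z -> c1%:~R != - (c2%:~R + delta).
Proof.
move=> generic c1_bound c2_bound; apply/eqP => collision.
have delta_int : delta = (- c1 - c2)%:~R by rewrite rmorphB rmorphN /= collision; ring.
case: generic => [r0_or_s0 | not_int | delta_large].
- by case: r0_or_s0 => r0_or_s0; subst; lia.
- by apply: not_int; exists (- c1 - c2).
move: delta_large; have -> : (r + s)%:R - 2 = ((r + s)%:Z - 2)%:~R :> C by rewrite rmorphB.
by rewrite delta_int -intr_norm ltr_int; lia.
Qed.

Definition small_walls : seq (nat * nat) := [:: (1, 2); (1, 3); (2, 1); (3, 1)]%N.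

Definition partitions_le3 : seq (seq nat) :=
  [:: [::]; [:: 1]; [:: 2]; [:: 1; 1]; [:: 3]; [:: 2; 1]; [:: 1; 1; 1]]%N.

Lemma mem_partitions_le3 nu : is_partition nu -> (sumn nu <= 3)%N -> nu \in partitions_le3.
Proof.
case: nu => [|a [|b [|c [|d l]]]] //=.
- by case: a => [|[|[|[|a]]]].
- by case: a => [|[|[|[|a]]]]; case: b => [|[|[|[|b]]]].
- by case: a => [|[|[|[|a]]]]; case: b => [|[|[|[|b]]]]; case: c => [|[|[|[|c]]]].
by rewrite /is_partition /= => /andP[_ /and5P[? ? ? ? _]]; lia.
Qed.

Lemma in_Lambda_t_sumn r s lam : in_Lambda r s lam -> in_Lambda_t r s (r - sumn lam.1) lam.
Proof.
by case=> t /[dup] lam_t /and5P[t_le _ _ /eqP size_left _]; rewrite size_left subKn //; lia.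
Qed.

Definition contents_determine_bipartition (r s : nat) : bool :=
  let bips := [seq (a, b) | a <- partitions_le3, b <- partitions_le3] in
  all (fun lam => all (fun mu =>
    [&& in_Lambda_t r s (r - sumn lam.1) lam, in_Lambda_t r s (r - sumn mu.1) mu &
        perm_eq (contents lam.1 ++ map -%R (contents mu.2))
                (contents mu.1 ++ map -%R (contents lam.2))] ==> (lam == mu)) bips) bips.

Lemma small_walls_contents_determine_bipartition :
  all (fun rs => contents_determine_bipartition rs.1 rs.2) small_walls.
Proof. by vm_compute. Qed.

Lemma bipartition_eq_of_perm_contents_small_wall (C : numDomainType) r s lam mu :
  (r, s) \in small_walls -> in_Lambda r s lam -> in_Lambda r s mu ->
  perm_eq (left_contents lam ++ right_contents (0 : C) mu)
          (left_contents mu ++ right_contents 0 lam) ->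
  lam = mu.
Proof.
move=> small /in_Lambda_t_sumn lam_rs /in_Lambda_t_sumn mu_rs.
have signed_contents nu nu' : left_contents nu ++ right_contents 0 nu' =
    map intr (contents nu.1 ++ map -%R (contents nu'.2)) :> seq C.
  rewrite map_cat -map_comp; congr (_ ++ _).
  by apply: eq_map => c /=; rewrite addr0 rmorphN.
rewrite !signed_contents => /(perm_map_inj (@intr_inj C)) same_contents.
have rs_le3 : (r <= 3)%N /\ (s <= 3)%N by move: small; rewrite !inE => /or4P[] /eqP[-> ->].
have bip_le3 nu : in_Lambda_t r s (r - sumn nu.1) nu ->
    nu \in [seq (a, b) | a <- partitions_le3, b <- partitions_le3].
  case: nu => a b /and5P[_ a_part b_part /eqP size_a /eqP size_b].
  rewrite /= in size_a size_b.
  by apply: allpairs_f; apply: mem_partitions_le3 => //=; lia.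
move/allP: small_walls_contents_determine_bipartition => /(_ _ small) /allP.
move=> /(_ _ (bip_le3 _ lam_rs)) /allP /(_ _ (bip_le3 _ mu_rs)).
by rewrite lam_rs mu_rs same_contents => /eqP.
Qed.

Lemma bipartition_eq_of_perm_contents_semisimple
    (C : numClosedFieldType) r s (delta : C) lam mu :
  walled_brauer_semisimple r s delta -> in_Lambda r s lam -> in_Lambda r s mu ->
  perm_eq (left_contents lam ++ right_contents delta mu)
          (left_contents mu ++ right_contents delta lam) ->
  lam = mu.
Proof.
move=> semisimple lam_rs mu_rs.
have [[-> small]|generic] : (delta = 0 /\ (r, s) \in small_walls) \/
    [\/ r = 0%N \/ s = 0%N, ~ (exists z : int, delta = z%:~R) | (r + s)%:R - 2 < `|delta|].
  by case: semisimple => h;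
    [right; apply: Or31 | right; apply: Or32 | right; apply: Or33 | left].
  exact: bipartition_eq_of_perm_contents_small_wall small lam_rs mu_rs.
case: (lam_rs) => t1 /and5P[_ lam1_part lam2_part _ _].
case: (mu_rs) => t2 /and5P[_ mu1_part mu2_part _ _].
have [lam1_bound lam2_bound] := in_Lambda_contents_bound lam_rs.
have [mu1_bound mu2_bound] := in_Lambda_contents_bound mu_rs.
apply: bipartition_eq_of_perm_contents => // c1 c2.
rewrite !mem_cat => /orP[/lam1_bound|/mu1_bound] c1_bound.
all: case/orP => [/lam2_bound|/mu2_bound] c2_bound.
all: exact: no_content_collision generic c1_bound c2_bound.
Qed.

Theorem mainTheorem6 (C : numClosedFieldType) (r s : nat) (delta : C)
  (lam mu : seq nat * seq nat) :
  walled_brauer_semisimple r s delta ->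
  in_Lambda r s lam -> in_Lambda r s mu -> lam <> mu ->
  exists p : mpoly C (r + s),
    supersymmetric p /\ meval p (cpoint r s delta lam) != meval p (cpoint r s delta mu).
Proof.
move=> semisimple lam_rs mu_rs lam_neq_mu.
have not_perm : ~~ perm_eq (left_contents lam ++ right_contents delta mu)
                           (left_contents mu ++ right_contents delta lam).
  apply/negP => /(bipartition_eq_of_perm_contents_semisimple semisimple lam_rs mu_rs).
  exact: lam_neq_mu.
have [q q_separates] := sum_horner_separates not_perm.
exists (psum_poly r s q); split; first exact: psum_poly_supersymmetric.
rewrite !meval_psum_poly_cpoint //; apply: contraNneq q_separates => /eqP same_value.
by rewrite !big_cat /=; move: same_value; rewrite subr_eq addrAC eq_sym subr_eq eq_sym.
Qed.
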